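(* Let $M:=\mathbb R^2\setminus\{(0,0)\}$, fix $\lambda>0$, and let $\gamma:(0,1]\to M$, $\gamma(t)=(t,\lambda e^{-1/t})$, and $\alpha:(0,1]\to M$, $\alpha(t)=(t,0)$. Then: (1) for every $f\in\mathcal S^*(M)$ the limit $\lim_{t\to0^+}f(\gamma(t))$ exists in $\mathbb R$; (2) $\mathfrak m^*:=\{f\in\mathcal S^*(M):\lim_{t\to0^+}f(\gamma(t))=0\}$ is a maximal ideal of $\mathcal S^*(M)$; (3) $\mathfrak m^*=\mathfrak m^*_\alpha:=\{f\in\mathcal S^*(M):\lim_{t\to0^+}f(t,0)=0\}$.
   Context: $\mathcal S^*(M)$ denotes the ring of bounded continuous semialgebraic functions $M\to\mathbb R$ (functions whose graph is a semialgebraic set). *)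

From Stdlib Require Import Reals Lra.
Open Scope R_scope.

Inductive poly3 : Type :=
| PX | PY | PZ
| PConst (c : R)
| PAdd (p q : poly3)
| PMul (p q : poly3)
| PNeg (p : poly3).

Fixpoint peval (p : poly3) (x y z : R) : R :=
  match p with
  | PX => x | PY => y | PZ => z
  | PConst c => c
  | PAdd p q => peval p x y z + peval q x y z
  | PMul p q => peval p x y z * peval q x y z
  | PNeg p => - peval p x y z
  end.

Inductive sa_formula : Type :=
| FPos (p : poly3)
| FZero (p : poly3)
| FAnd (a b : sa_formula)
| FOr (a b : sa_formula)
| FNot (a : sa_formula).

Fixpoint feval (f : sa_formula) (x y z : R) : Prop :=
  match f with
  | FPos p => 0 < peval p x y z
  | FZero p => peval p x y z = 0
  | FAnd a b => feval a x y z /\ feval b x y z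
  | FOr a b => feval a x y z \/ feval b x y z
  | FNot a => ~ feval a x y z
  end.

Definition semialgebraic3 (S : R -> R -> R -> Prop) : Prop :=
  exists phi : sa_formula, forall x y z, S x y z <-> feval phi x y z.

Definition M : Type := { p : R * R | p <> (0, 0) }.

Definition Mx (p : M) : R := fst (proj1_sig p).
Definition My (p : M) : R := snd (proj1_sig p).

Definition dist2 (p q : M) : R :=
  sqrt ((Mx p - Mx q) ^ 2 + (My p - My q) ^ 2).

Definition continuous_M (f : M -> R) : Prop :=
  forall p eps, 0 < eps -> exists delta, 0 < delta /\
    forall q, dist2 p q < delta -> Rabs (f q - f p) < eps.

Definition bounded_M (f : M -> R) : Prop :=
  exists C, forall p, Rabs (f p) <= C.

Definition graph_M (f : M -> R) (x y z : R) : Prop :=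
  exists H : (x, y) <> (0, 0), z = f (exist _ (x, y) H).

Definition semialgebraic_fun (f : M -> R) : Prop :=
  semialgebraic3 (graph_M f).

Definition Sstar (f : M -> R) : Prop :=
  continuous_M f /\ bounded_M f /\ semialgebraic_fun f.

Definition is_ideal (I : (M -> R) -> Prop) : Prop :=
  (forall f, I f -> Sstar f) /\
  I (fun _ => 0) /\
  (forall f g, I f -> I g -> I (fun p => f p + g p)) /\
  (forall f g, Sstar g -> I f -> I (fun p => g p * f p)).

Definition is_maximal_ideal (I : (M -> R) -> Prop) : Prop :=
  is_ideal I /\
  (exists g, Sstar g /\ ~ I g) /\
  (forall J, is_ideal J -> (forall f, I f -> J f) ->
     (forall f, J f <-> I f) \/ (forall f, Sstar f -> J f)).

Lemma pos_pair_nonzero (t u : R) : 0 < t -> (t, u) <> (0, 0).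
Proof. intros Ht E; injection E; intros; lra. Qed.

Definition gam (lam t : R) (Ht : 0 < t) : M :=
  exist _ (t, lam * exp (- / t)) (pos_pair_nonzero t _ Ht).

Definition alp (t : R) (Ht : 0 < t) : M :=
  exist _ (t, 0) (pos_pair_nonzero t _ Ht).

Definition lim_0plus (c : forall t : R, 0 < t -> M) (f : M -> R) (L : R) : Prop :=
  forall eps, 0 < eps -> exists delta, 0 < delta /\
    forall t (Ht : 0 < t), t < delta -> Rabs (f (c t Ht) - L) < eps.

(* After quantifier elimination, every f in S^*(M) is described near the
   positive x-axis by finitely many polynomial sign conditions.  The sign of a
   bivariate polynomial P is eventually constant along the axis (y = 0, x -> 0+)
   and on every thin enough horn 0 < y < x^N: writing P = y^j (Q(x) + y P2(x,y)),
   the lowest-order term a x^k of Q swamps y P2 there.  Hence every superlevel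
   set {f > c} is eventually decided along the axis and on a horn, so f(x,0)
   tends to the supremum L of the levels eventually exceeded, and by continuity
   in y the values of f on a thin horn tend to L as well.  As lambda e^(-1/t) is
   smaller than any power of t, gamma eventually lies in every horn, so
   f(gamma(t)) and f(t,0) both tend to L.  The ideal m^* is the kernel of the
   surjective ring map f |-> L onto R, hence maximal. *)

From Stdlib Require Import Reals Lra ProofIrrelevance Classical ClassicalEpsilon.
From Stdlib Require Import FunctionalExtensionality.
From mathcomp Require Import all_boot all_order all_algebra Rstruct ordered_qelim.
From mathcomp Require qe_rcf lra.
Set Implicit Arguments. Unset Strict Implicit. Unset Printing Implicit Defensive.
Import Order.TTheory GRing.Theory Num.Theory Num.Def.
Local Open Scope R_scope.

(** * Quantifier elimination *)

Section QuantifierElimination.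
Local Open Scope ring_scope.

Fixpoint term_of_poly3 (i j k : nat) (p : poly3) : GRing.term R :=
  match p with
  | PX => GRing.Var _ i | PY => GRing.Var _ j | PZ => GRing.Var _ k
  | PConst c => GRing.Const c
  | PAdd p q => GRing.Add (term_of_poly3 i j k p) (term_of_poly3 i j k q)
  | PMul p q => GRing.Mul (term_of_poly3 i j k p) (term_of_poly3 i j k q)
  | PNeg p => GRing.Opp (term_of_poly3 i j k p)
  end.

Lemma eval_term_of_poly3 i j k p (e : seq R) :
  GRing.eval e (term_of_poly3 i j k p) = peval p e`_i e`_j e`_k.
Proof. by elim: p => //= [p -> q ->|p -> q ->|p ->]. Qed.

Fixpoint formula_of_sa (i j k : nat) (f : sa_formula) : ord.formula R :=
  match f with
  | FPos p => ord.Lt (GRing.Const 0) (term_of_poly3 i j k p)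
  | FZero p => ord.Equal (term_of_poly3 i j k p) (GRing.Const 0)
  | FAnd a b => ord.And (formula_of_sa i j k a) (formula_of_sa i j k b)
  | FOr a b => ord.Or (formula_of_sa i j k a) (formula_of_sa i j k b)
  | FNot a => ord.Not (formula_of_sa i j k a)
  end.

Lemma holds_formula_of_sa i j k f (e : seq R) :
  ord.holds e (formula_of_sa i j k f) <-> feval f e`_i e`_j e`_k.
Proof.
elim: f => /= [p|p|a IHa b IHb|a IHa b IHb|a IHa]; rewrite ?eval_term_of_poly3.
- by split => /RltP.
- by [].
- by rewrite IHa IHb.
- by rewrite IHa IHb.
- by rewrite IHa.
Qed.

(* The translation back is only faithful on ring terms and quantifier-free
   formulas evaluated in [:: x; y; z]; inverses, units and quantifiers are
   sent to junk. *)
Fixpoint poly3_of_term (t : GRing.term R) : poly3 :=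
  match t with
  | GRing.Var 0 => PX
  | GRing.Var 1 => PY
  | GRing.Var 2 => PZ
  | GRing.Var _ => PConst 0
  | GRing.Const c => PConst c
  | GRing.NatConst n => PConst n%:R
  | GRing.Add a b => PAdd (poly3_of_term a) (poly3_of_term b)
  | GRing.Opp a => PNeg (poly3_of_term a)
  | GRing.NatMul a n => PMul (poly3_of_term a) (PConst n%:R)
  | GRing.Mul a b => PMul (poly3_of_term a) (poly3_of_term b)
  | GRing.Inv _ => PConst 0
  | GRing.Exp a n => iter n (PMul (poly3_of_term a)) (PConst 1)
  end.

Lemma peval_poly3_of_term t x y z : GRing.rterm t ->
  peval (poly3_of_term t) x y z = GRing.eval [:: x; y; z] t.
Proof.
elim: t => //=.
- by case=> [|[|[|n]]] //= _; rewrite nth_nil.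
- by move=> a IHa b IHb /andP[ra rb]; rewrite IHa // IHb.
- by move=> a IHa ra; rewrite IHa.
- by move=> a IHa n ra; rewrite IHa //; exact: mulr_natr.
- by move=> a IHa b IHb /andP[ra rb]; rewrite IHa // IHb.
- move=> a IHa n ra; rewrite -IHa //.
  by elim: n => [|n IHn] /=; rewrite ?expr0 // exprS IHn.
Qed.

Fixpoint sa_of_formula (f : ord.formula R) : sa_formula :=
  match f with
  | ord.Bool true => FZero (PConst 0)
  | ord.Bool false => FPos (PConst 0)
  | ord.Equal a b => FZero (PAdd (poly3_of_term a) (PNeg (poly3_of_term b)))
  | ord.Lt a b => FPos (PAdd (poly3_of_term b) (PNeg (poly3_of_term a)))
  | ord.Le a b => FOr (FPos (PAdd (poly3_of_term b) (PNeg (poly3_of_term a))))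
                      (FZero (PAdd (poly3_of_term b) (PNeg (poly3_of_term a))))
  | ord.And a b => FAnd (sa_of_formula a) (sa_of_formula b)
  | ord.Or a b => FOr (sa_of_formula a) (sa_of_formula b)
  | ord.Implies a b => FOr (FNot (sa_of_formula a)) (sa_of_formula b)
  | ord.Not a => FNot (sa_of_formula a)
  | _ => FZero (PConst 0)
  end.

Lemma feval_sa_of_formula f x y z : ord.qf_form f -> ord.rformula f ->
  feval (sa_of_formula f) x y z <-> ord.qf_eval [:: x; y; z] f.
Proof.
elim: f => //=.
- by case; split => // /RltP; rewrite ltxx.
- move=> a b _ /andP[ra rb]; rewrite !peval_poly3_of_term // RplusE RoppE.
  by split => [/subr0_eq ->|/eqP ->]; rewrite ?eqxx ?subrr.
- move=> a b _ /andP[ra rb]; rewrite !peval_poly3_of_term // RplusE RoppE.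
  by rewrite -subr_gt0; split => /RltP.
- move=> a b _ /andP[ra rb]; rewrite !peval_poly3_of_term // RplusE RoppE.
  rewrite le_eqVlt -subr_gt0 eq_sym -subr_eq0.
  by split => [[/RltP ->|->]|/orP[/eqP|/RltP]]; rewrite ?eqxx ?orbT; auto.
- move=> a IHa b IHb /andP[qa qb] /andP[ra rb]; rewrite IHa // IHb //.
  by split => [[-> ->]|/andP[-> ->]].
- move=> a IHa b IHb /andP[qa qb] /andP[ra rb]; rewrite IHa // IHb //.
  by split => [[->|->]|/orP[->|->]]; rewrite ?orbT; auto.
- move=> a IHa b IHb /andP[qa qb] /andP[ra rb]; rewrite IHa // IHb //.
  by case: (ord.qf_eval _ a); case: (ord.qf_eval _ b); split => //=; intuition.
- by move=> a IHa qa ra; rewrite IHa //; case: (ord.qf_eval _ a); split.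
Qed.

(* Tarski–Seidenberg, from MathComp's quantifier elimination for real closed
   fields. *)
Lemma semialgebraic3_holds (f : ord.formula R) :
  semialgebraic3 (fun x y z => ord.holds [:: x; y; z] f).
Proof.
have /andP[qg rg] :=
  ord.quantifier_elim_wf (@qe_rcf.wf_QE_wproj R) (ord.to_rform_rformula f).
set g := ord.quantifier_elim _ _ in qg rg.
exists (sa_of_formula g) => x y z.
by rewrite feval_sa_of_formula //; split => /qe_rcf.rcf_satP.
Qed.

End QuantifierElimination.

(** * Semialgebraic functions on the punctured plane *)

(* Extension by zero across the puncture, so that graphs and germs can be
   handled as plain functions on R^2. *)
Definition ext (f : M -> R) (q : R * R) : R :=
  match excluded_middle_informative (q <> (0, 0)) with
  | left H => f (exist _ q H)
  | right _ => 0
  end.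

Lemma ext_val (f : M -> R) q (H : q <> (0, 0)) : ext f q = f (exist _ q H).
Proof.
rewrite /ext; case: excluded_middle_informative => [H'|//].
by rewrite (proof_irrelevance _ H' H).
Qed.

Lemma ext_proj1 (f : M -> R) p : ext f (proj1_sig p) = f p.
Proof. by case: p => q H; rewrite (ext_val f H). Qed.

Definition semialgebraic_map (h : R * R -> R) : Prop :=
  semialgebraic3 (fun x y z => z = h (x, y)).

Lemma semialgebraic_map_ext f : semialgebraic_fun f -> semialgebraic_map (ext f).
Proof.
move=> [phi Hphi].
exists (FOr phi (FAnd (FZero PX) (FAnd (FZero PY) (FZero PZ)))) => x y z /=.
rewrite -Hphi /graph_M /ext; case: excluded_middle_informative => [H|/NNPP [-> ->]].
- split=> [->|[[H' ->]|[hx [hy _]]]]; first by left; exists H.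
    by rewrite (proof_irrelevance _ H' H).
  by exfalso; apply: H; rewrite hx hy.
- by split=> [->|[[H _]|[_ [_ ->]]]] //; right.
Qed.

Lemma semialgebraic_fun_of_map (f : M -> R) (h : R * R -> R) :
  semialgebraic_map h -> (forall p, f p = h (proj1_sig p)) -> semialgebraic_fun f.
Proof.
move=> [phi Hphi] fh.
exists (FAnd phi (FNot (FAnd (FZero PX) (FZero PY)))) => x y z /=.
rewrite -Hphi /graph_M; split=> [[H ->]|[-> nz]].
  by rewrite fh; split=> // -[hx hy]; apply: H; rewrite hx hy.
have H : (x, y) <> (0, 0) by case=> hx hy; apply: nz.
by exists H; rewrite fh.
Qed.

Lemma semialgebraic_map_cst c : semialgebraic_map (fun _ => c).
Proof. by exists (FZero (PAdd PZ (PNeg (PConst c)))) => x y z /=; split; lra. Qed.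

Lemma semialgebraic_map_binop (h1 h2 : R * R -> R) (op : R -> R -> R)
    (top : GRing.term R -> GRing.term R -> GRing.term R) :
  (forall e a b, GRing.eval e (top a b) = op (GRing.eval e a) (GRing.eval e b)) ->
  semialgebraic_map h1 -> semialgebraic_map h2 ->
  semialgebraic_map (fun q => op (h1 q) (h2 q)).
Proof.
move=> Hev [phi Hphi] [psi Hpsi].
have [chi Hchi] := semialgebraic3_holds (ord.Exists 3 (ord.Exists 4
  (ord.And (formula_of_sa 0 1 3 phi) (ord.And (formula_of_sa 0 1 4 psi)
     (ord.Equal (GRing.Var _ 2) (top (GRing.Var _ 3) (GRing.Var _ 4))))))).
exists chi => x y z; rewrite -Hchi /=; split=> [->|[u [v]]].
- exists (h1 (x, y)), (h2 (x, y)); rewrite !holds_formula_of_sa /= Hev.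
  by split; [apply/Hphi | split; [apply/Hpsi |]].
- by rewrite !holds_formula_of_sa /= Hev => -[/Hphi -> [/Hpsi -> ->]].
Qed.

Lemma semialgebraic3_lt_map (h : R * R -> R) :
  semialgebraic_map h -> semialgebraic3 (fun x y z => z < h (x, y)).
Proof.
move=> [phi Hphi].
have [chi Hchi] := semialgebraic3_holds (ord.Exists 3
  (ord.And (formula_of_sa 0 1 3 phi) (ord.Lt (GRing.Var _ 2) (GRing.Var _ 3)))).
exists chi => x y z; rewrite -Hchi /=; split=> [hz|[u]].
- exists (h (x, y)); rewrite holds_formula_of_sa /=.
  by split; [apply/Hphi | apply/RltP].
- by rewrite holds_formula_of_sa /= => -[/Hphi -> /RltP].
Qed.

Lemma semialgebraic_fun_binop (f g : M -> R) (op : R -> R -> R)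
    (top : GRing.term R -> GRing.term R -> GRing.term R) :
  (forall e a b, GRing.eval e (top a b) = op (GRing.eval e a) (GRing.eval e b)) ->
  semialgebraic_fun f -> semialgebraic_fun g ->
  semialgebraic_fun (fun p => op (f p) (g p)).
Proof.
move=> Hev /semialgebraic_map_ext fs /semialgebraic_map_ext gs.
apply: semialgebraic_fun_of_map (semialgebraic_map_binop Hev fs gs) _ => p.
by rewrite !ext_proj1.
Qed.

(** * Signs of polynomials near the origin *)

Section PolynomialSigns.
Import lra.
Local Open Scope ring_scope.

Lemma poly_coef0_split (R : nzRingType) (p : {poly R}) :
  p = (p`_0)%:P + drop_poly 1 p * 'X.
Proof.
rewrite -[LHS](poly_take_drop 1) expr1; congr (_ + _).
by apply/polyP => i; rewrite coef_take_poly coefC; case: i.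
Qed.

Variable F : realFieldType.

Lemma sgr_addr_small (u d : F) : `|d| < `|u| -> sgr (u + d) = sgr u.
Proof.
move=> h; have := ler_norm d; have := ler_norm (- d); rewrite normrN.
case: (ltgtP u 0) => hu.
- by rewrite (ltr0_norm hu) in h => *; rewrite !ltr0_sg //; lra.
- by rewrite (gtr0_norm hu) in h => *; rewrite !gtr0_sg //; lra.
- by rewrite hu normr0 in h; have := normr_ge0 d; lra.
Qed.

Definition coef_norm (p : {poly F}) : F := \sum_(i < size p) `|p`_i|.

Lemma coef_norm_ge0 p : 0 <= coef_norm p.
Proof. by apply: sumr_ge0 => i _; apply: normr_ge0. Qed.

Lemma norm_horner_le p (x : F) : `|x| <= 1 -> `|p.[x]| <= coef_norm p.
Proof.
move=> hx; rewrite horner_coef; apply: le_trans (ler_norm_sum _ _ _) _.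
apply: ler_sum => i _; rewrite normrM normrX.
have := exprn_ile1 i (normr_ge0 x) hx; have := exprn_ge0 i (normr_ge0 x).
have := normr_ge0 p`_i; nra.
Qed.

Lemma norm_horner2_le (P : {poly {poly F}}) (x y : F) :
  `|x| <= 1 -> `|y| <= 1 -> `|P.[y%:P].[x]| <= \sum_(i < size P) coef_norm P`_i.
Proof.
move=> hx hy; rewrite (horner_coef P) horner_sum.
apply: le_trans (ler_norm_sum _ _ _) _; apply: ler_sum => i _.
rewrite -polyC_exp hornerM hornerC normrM normrX.
have := exprn_ile1 i (normr_ge0 y) hy; have := exprn_ge0 i (normr_ge0 y).
have := norm_horner_le P`_i hx; have := normr_ge0 (P`_i).[x]; nra.
Qed.

(* Near 0+, a nonzero polynomial behaves like its lowest-order term a x^k. *)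
Lemma horner_near0 (p : {poly F}) : p != 0 ->
  exists (k : nat) (a eps s : F), [/\ 0 < a, 0 < eps &
    forall x, 0 < x < eps -> a * x ^+ k <= `|p.[x]| /\ sgr p.[x] = s].
Proof.
move=> p0; have [k [q /implyP/(_ p0) nq ->]] := multiplicity_XsubC p 0.
rewrite subr0 in nq *; move: nq; rewrite /root horner_coef0 => c0.
set c := q`_0 in c0; set r := drop_poly 1 q; set B := coef_norm r.
have cP : 0 < `|c| by rewrite normr_gt0.
have B0 : 0 <= B := coef_norm_ge0 r.
exists k, (`|c| / 2), (Num.min 1 (`|c| / (2 * (B + 1)))), (sgr c).
split; [lra | by rewrite lt_min ltr01 /=; apply: divr_gt0 => //; lra |].
move=> x /andP[x0]; rewrite lt_min => /andP[x1 xc].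
have xB : x * B * 2 < `|c| by move: xc; rewrite ltr_pdivlMr; lra.
have rB : `|r.[x]| <= B by apply: norm_horner_le; rewrite gtr0_norm //; lra.
have small : `|x * r.[x]| < `|c| / 2.
  by rewrite normrM (gtr0_norm x0); have := normr_ge0 r.[x]; nra.
have Eq : q.[x] = c + x * r.[x].
  by rewrite {1}[q]poly_coef0_split hornerD hornerC hornerMX mulrC.
have xk := exprn_gt0 k x0.
rewrite hornerM hornerXn normrM sgrM (gtr0_sg xk) mulr1 (gtr0_norm xk) Eq.
split; last by apply/sgr_addr_small/(lt_trans small); rewrite ltr_pdivrMr //; lra.
apply: (ler_wpM2r (ltW xk)); have := lerB_normD c (x * r.[x]); lra.
Qed.

Lemma sgr_horner_near0 (p : {poly F}) :
  exists (eps s : F), 0 < eps /\ forall x, 0 < x < eps -> sgr p.[x] = s.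
Proof.
have [->|p0] := eqVneq p 0.
  by exists 1, 0; split => // x _; rewrite horner0 sgr0.
have [k [a [eps [s [_ eps0 hp]]]]] := horner_near0 p0.
by exists eps, s; split => // x /hp[].
Qed.

(* On a horn 0 < y < x^N at the origin, the terms of P divisible by y^(j+1)
   are negligible against the x-dominant part of the coefficient of y^j. *)
Lemma sgr_horner2_horn (P : {poly {poly F}}) :
  exists (eps s : F) (N : nat), 0 < eps /\
    forall x y, 0 < x < eps -> 0 < y < x ^+ N -> sgr P.[y%:P].[x] = s.
Proof.
have [->|P0] := eqVneq P 0.
  by exists 1, 0, 0%N; split => // x y _ _; rewrite !horner0 sgr0.
have [j [P1 /implyP/(_ P0) nr ->]] := multiplicity_XsubC P 0.
rewrite subr0 in nr *; move: nr; rewrite /root horner_coef0 => Q0.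
set Q := P1`_0 in Q0; set P2 := drop_poly 1 P1.
have [k [a [e [s [a0 e0 hQ]]]]] := horner_near0 Q0.
set B := \sum_(i < size P2) coef_norm P2`_i.
have B0 : 0 <= B by apply: sumr_ge0 => i _; apply: coef_norm_ge0.
exists (Num.min (Num.min 1 e) (a / (B + 1))), s, k.+1.
split; first by rewrite !lt_min ltr01 e0 /=; apply: divr_gt0 => //; lra.
move=> x y /andP[x0]; rewrite !lt_min => /andP[/andP[x1 xe] xa] /andP[y0 yx].
have xk := exprn_gt0 k x0.
have xB : x * B < a by move: xa; rewrite ltr_pdivlMr; lra.
have [Qa sQ] : a * x ^+ k <= `|Q.[x]| /\ sgr Q.[x] = s by apply: hQ; rewrite x0.
have y1 : y <= 1.
  by have := exprn_ile1 k.+1 (ltW x0) (ltW x1); lra.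
have hP2 : `|P2.[y%:P].[x]| <= B.
  by apply: norm_horner2_le; rewrite ger0_norm //; lra.
have E1 : P1.[y%:P].[x] = Q.[x] + P2.[y%:P].[x] * y.
  by rewrite {1}[P1]poly_coef0_split hornerD hornerC hornerMX hornerD hornerM hornerC.
rewrite hornerM hornerXn -polyC_exp hornerM hornerC sgrM.
rewrite (gtr0_sg (exprn_gt0 j y0)) mulr1.
rewrite E1 -sQ; apply: sgr_addr_small.
rewrite exprS in yx; rewrite normrM (gtr0_norm y0).
have := normr_ge0 P2.[y%:P].[x]; nra.
Qed.

End PolynomialSigns.

(** * Germs along the axis and on horns *)

Lemma pos_lt_min (a b : R) : 0 < a -> 0 < b -> exists2 t, 0 < t & t < a /\ t < b.
Proof.
move=> a0 b0; exists (Rmin a b / 2); first by have := Rmin_glb_lt _ _ _ a0 b0; lra.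
by have := Rmin_l a b; have := Rmin_r a b; have := Rmin_glb_lt _ _ _ a0 b0; lra.
Qed.

Definition near_axis0 (P : R * R -> Prop) : Prop :=
  exists2 eps, 0 < eps & forall x, 0 < x < eps -> P (x, 0).

(* The curve gamma eventually lies in every horn [0 < y < x^N]. *)
Definition near_horn0 (P : R * R -> Prop) : Prop :=
  exists eps N, 0 < eps /\ forall x y, 0 < x < eps -> 0 < y < x ^ N -> P (x, y).

Lemma near_axis0_mono (P Q : R * R -> Prop) :
  (forall q, P q -> Q q) -> near_axis0 P -> near_axis0 Q.
Proof. by move=> PQ [eps e0 H]; exists eps => // x /H /PQ. Qed.

Lemma near_axis0_and (P Q : R * R -> Prop) :
  near_axis0 P -> near_axis0 Q -> near_axis0 (fun q => P q /\ Q q).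
Proof.
move=> [e1 e10 H1] [e2 e20 H2]; have [e e0 [ee1 ee2]] := pos_lt_min e10 e20.
by exists e => // x [x0 xe]; split; [apply: H1 | apply: H2]; lra.
Qed.

Lemma near_horn0_mono (P Q : R * R -> Prop) :
  (forall q, P q -> Q q) -> near_horn0 P -> near_horn0 Q.
Proof.
by move=> PQ [eps [N [e0 H]]]; exists eps, N; split => // x y hx /(H x y hx) /PQ.
Qed.

Lemma pow_le_pow_le1 (x : R) (n m : nat) :
  0 <= x -> x <= 1 -> (n <= m)%N -> x ^ m <= x ^ n.
Proof.
move=> x0 x1 nm; rewrite !RpowE; apply/RleP.
by apply: ler_wiXn2l => //; apply/RleP.
Qed.

Lemma near_horn0_and (P Q : R * R -> Prop) :
  near_horn0 P -> near_horn0 Q -> near_horn0 (fun q => P q /\ Q q).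
Proof.
move=> [e1 [N1 [e10 H1]]] [e2 [N2 [e20 H2]]].
exists (Rmin 1 (Rmin e1 e2)), (maxn N1 N2); split.
  by apply: Rmin_glb_lt; [lra | exact: Rmin_glb_lt].
move=> x y [x0 xe] [y0 yx].
have m1 := Rmin_l 1 (Rmin e1 e2); have m2 := Rmin_r 1 (Rmin e1 e2).
have m3 := Rmin_l e1 e2; have m4 := Rmin_r e1 e2.
have p1 : x ^ maxn N1 N2 <= x ^ N1.
  by apply: pow_le_pow_le1; [lra | lra | exact: leq_maxl].
have p2 : x ^ maxn N1 N2 <= x ^ N2.
  by apply: pow_le_pow_le1; [lra | lra | exact: leq_maxr].
by split; [apply: H1 | apply: H2]; lra.
Qed.

Lemma near_axis0_true : near_axis0 (fun _ => True).
Proof. by exists 1; [lra | ]. Qed.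

Lemma near_axis0_proper : ~ near_axis0 (fun _ => False).
Proof. by move=> [eps e0 H]; apply: (H (eps / 2)); lra. Qed.

Section Bivariate.
Local Open Scope ring_scope.

Fixpoint poly2_of_poly3 (c : R) (p : poly3) : {poly {poly R}} :=
  match p with
  | PX => 'X%:P
  | PY => 'X
  | PZ => c%:P%:P
  | PConst a => a%:P%:P
  | PAdd p q => poly2_of_poly3 c p + poly2_of_poly3 c q
  | PMul p q => poly2_of_poly3 c p * poly2_of_poly3 c q
  | PNeg p => - poly2_of_poly3 c p
  end.

Lemma horner2_poly2_of_poly3 c p x y :
  (poly2_of_poly3 c p).[y%:P].[x] = peval p x y c.
Proof.
elim: p => /= [|||a|p IHp q IHq|p IHp q IHq|p IHp];
  by rewrite ?hornerC ?hornerX ?hornerD ?hornerM ?hornerN ?IHp ?IHq ?hornerC.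
Qed.

End Bivariate.

Lemma near_axis0_sgr (p : poly3) (c : R) :
  exists s, near_axis0 (fun q => sgr (peval p q.1 q.2 c) = s).
Proof.
have [eps [s [/RltP e0 H]]] := sgr_horner_near0 (poly2_of_poly3 c p)`_0.
exists s, eps => // x [/RltP x0 /RltP xe] /=.
by rewrite -horner2_poly2_of_poly3 polyC0 horner_coef0; apply: H; rewrite x0.
Qed.

Lemma near_horn0_sgr (p : poly3) (c : R) :
  exists s, near_horn0 (fun q => sgr (peval p q.1 q.2 c) = s).
Proof.
have [eps [s [N [/RltP e0 H]]]] := sgr_horner2_horn (poly2_of_poly3 c p).
exists s, eps, N; split => // x y [/RltP x0 /RltP xe] [/RltP y0].
by rewrite RpowE /= -horner2_poly2_of_poly3 => /RltP yx; apply: H; rewrite ?x0 ?y0.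
Qed.

Section Decided.
Variable T : Type.
Variable E : (T -> Prop) -> Prop.
Hypothesis E_mono : forall P Q : T -> Prop, (forall t, P t -> Q t) -> E P -> E Q.
Hypothesis E_and : forall P Q : T -> Prop, E P -> E Q -> E (fun t => P t /\ Q t).
Hypothesis E_true : E (fun _ => True).
Hypothesis E_proper : ~ E (fun _ => False).

Definition decided (P : T -> Prop) : Prop := E P \/ E (fun t => ~ P t).

Lemma decided_not P : decided P -> decided (fun t => ~ P t).
Proof. by case=> H; [right | left]; apply: E_mono H => t; tauto. Qed.

Lemma decided_and P Q : decided P -> decided Q -> decided (fun t => P t /\ Q t).
Proof.
case=> [HP|HP] [HQ|HQ]; first by left; apply: E_and.
- by right; apply: E_mono HQ => t; tauto.
- by right; apply: E_mono HP => t; tauto.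
- by right; apply: E_mono HP => t; tauto.
Qed.

Lemma decided_or P Q : decided P -> decided Q -> decided (fun t => P t \/ Q t).
Proof.
case=> [HP|HP] [HQ|HQ]; try by left; apply: E_mono (HP) => t; tauto.
- by left; apply: E_mono HQ => t; tauto.
- by right; apply: E_mono (E_and HP HQ) => t; tauto.
Qed.

(* The limit is the supremum of the levels eventually exceeded. *)
Lemma decided_superlevel_cvg (g : T -> R) (C : R) :
  (forall t, Rabs (g t) <= C) -> (forall c, decided (fun t => c < g t)) ->
  exists L, forall eps, 0 < eps -> E (fun t => Rabs (g t - L) < eps).
Proof.
move=> gC dec; pose S c := E (fun t => c < g t).
have S_le c : S c -> c <= C.
  move=> Sc; apply: Rnot_lt_le => Cc; apply: E_proper; apply: E_mono Sc => t.
  by have := Rle_abs (g t); have := gC t; lra.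
have S_ub : bound S by exists C => c /S_le.
have S_ne : exists c, S c.
  exists (- C - 1); apply: E_mono E_true => t _.
  by have := Rle_abs (- g t); rewrite Rabs_Ropp; have := gC t; lra.
have [L [L_ub L_least]] := completeness S S_ub S_ne.
exists L => eps e0.
have [c Sc cL] : exists2 c, S c & L - eps / 2 < c.
  apply: NNPP => H; suff : L <= L - eps / 2 by lra.
  by apply: L_least => c Sc; apply: Rnot_lt_le => cL; apply: H; exists c.
have not_above : ~ S (L + eps / 2) by move/L_ub; lra.
case: (dec (L + eps / 2)) => [//|below].
apply: E_mono (E_and Sc below) => t [lo hi]; apply: Rabs_def1; lra.
Qed.

End Decided.

Section SemialgebraicGerms.
Variable E : (R * R -> Prop) -> Prop.
Hypothesis E_mono : forall P Q : R * R -> Prop, (forall q, P q -> Q q) -> E P -> E Q.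
Hypothesis E_and : forall P Q : R * R -> Prop, E P -> E Q -> E (fun q => P q /\ Q q).
Hypothesis E_sgr : forall p c, exists s, E (fun q => sgr (peval p q.1 q.2 c) = s).

Lemma decided_sgr_eq p c s' : decided E (fun q => sgr (peval p q.1 q.2 c) = s').
Proof.
have [s Hs] := E_sgr p c.
have [<-|ne] := eqVneq s s'; first by left.
by right; apply: E_mono Hs => q -> /eqP; rewrite (negbTE ne).
Qed.

Lemma decided_feval phi c : decided E (fun q => feval phi q.1 q.2 c).
Proof.
elim: phi => [p|p|a IHa b IHb|a IHa b IHb|a IHa] /=.
- case: (decided_sgr_eq p c 1) => H; [left | right]; apply: E_mono H => q.
    by move/eqP; rewrite sgr_cp0 => /RltP.
  by move=> ne /RltP; rewrite -sgr_cp0 => /eqP.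
- case: (decided_sgr_eq p c 0) => H; [left | right]; apply: E_mono H => q.
    by move/eqP; rewrite sgr_eq0 => /eqP.
  by move=> ne h; apply: ne; rewrite h sgr0.
- exact: decided_and.
- exact: decided_or.
- exact: decided_not.
Qed.

Lemma decided_lt_map (h : R * R -> R) c :
  semialgebraic_map h -> decided E (fun q => c < h q).
Proof.
move=> /semialgebraic3_lt_map [phi Hphi].
case: (decided_feval phi c) => H; [left | right].
all: by apply: E_mono H => -[x y] /=; rewrite -Hphi.
Qed.

End SemialgebraicGerms.

(** * Limits along the axis and along gamma *)


Lemma ext_vertical_continuity (f : M -> R) t eps :
  continuous_M f -> 0 < t -> 0 < eps ->
  exists2 d, 0 < d & forall s, 0 < s < d -> Rabs (ext f (t, s) - ext f (t, 0)) < eps.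
Proof.
move=> fc t0 e0; have [d [d0 hd]] := fc (alp t t0) eps e0.
exists d => // s [s0 sd].
rewrite (ext_val f (pos_pair_nonzero t s t0)) (ext_val f (pos_pair_nonzero t 0 t0)).
apply: hd; rewrite /dist2 /Mx /My /=.
have -> : (t - t) ^ 2 + (0 - s) ^ 2 = s ^ 2 by ring.
by rewrite sqrt_pow2; lra.
Qed.

Section HornLimit.
Variables (g : R * R -> R) (L : R).
Hypothesis g_vcont : forall t eps, 0 < t -> 0 < eps ->
  exists2 d, 0 < d & forall s, 0 < s < d -> Rabs (g (t, s) - g (t, 0)) < eps.
Hypothesis g_axis : forall eps, 0 < eps -> near_axis0 (fun q => Rabs (g q - L) < eps).

(* Each vertical segment above the axis meets the horn arbitrarily close to
   the axis, where g is close to its value on the axis. *)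
Lemma near_horn0_cluster (Q : R -> Prop) : near_horn0 (fun q => Q (g q)) ->
  forall eps, 0 < eps -> exists2 v, Q v & Rabs (v - L) < eps.
Proof.
move=> [eh [N [eh0 hQ]]] eps e0.
have [ea ea0 ha] := g_axis (ltac:(lra) : 0 < eps / 2).
have [t t0 [teh tea]] := pos_lt_min eh0 ea0.
have [d d0 hd] := g_vcont t0 (ltac:(lra) : 0 < eps / 2).
have [s s0 [sd stN]] := pos_lt_min d0 (pow_lt t N t0).
exists (g (t, s)); first by apply: hQ; lra.
have := hd s ltac:(lra); have := ha t ltac:(lra) => h1 h2.
have -> : g (t, s) - L = g (t, s) - g (t, 0) + (g (t, 0) - L) by ring.
by have := Rabs_triang (g (t, s) - g (t, 0)) (g (t, 0) - L); lra.
Qed.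

Lemma near_horn0_cvg : (forall c, decided near_horn0 (fun q => c < g q)) ->
  forall eps, 0 < eps -> near_horn0 (fun q => Rabs (g q - L) < eps).
Proof.
move=> dec eps e0.
have e2 : 0 < eps / 2 by lra.
have below : near_horn0 (fun q => ~ L + eps / 2 < g q).
  case: (dec (L + eps / 2)) => // H.
  by have [v hv /Rabs_def2] := near_horn0_cluster (Q := Rlt (L + eps / 2)) H e2; lra.
have above : near_horn0 (fun q => L - eps / 2 < g q).
  case: (dec (L - eps / 2)) => // H.
  have [v hv /Rabs_def2] := near_horn0_cluster (Q := fun v => ~ L - eps / 2 < v) H e2.
  by lra.
apply: near_horn0_mono (near_horn0_and below above) => q [hi lo].
by apply: Rabs_def1; lra.
Qed.

End HornLimit.

Lemma exp_INR_mul (m : nat) (b : R) : exp (INR m * b) = exp b ^ m.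
Proof.
elim: m => [|m IH]; first by rewrite /= Rmult_0_l exp_0.
by rewrite S_INR Rmult_plus_distr_r Rmult_1_l exp_plus IH /=; ring.
Qed.

Lemma pow_div_le_exp (m : nat) (x : R) : 0 <= x -> (x / INR m.+1) ^ m.+1 <= exp x.
Proof.
move=> x0; have mP : 0 < INR m.+1 by apply/lt_0_INR/Nat.lt_0_succ.
have b0 : 0 <= x / INR m.+1.
  by apply: Rmult_le_pos; [lra | apply/Rlt_le/Rinv_0_lt_compat].
have -> : exp x = exp (x / INR m.+1) ^ m.+1.
  by rewrite -exp_INR_mul; congr exp; field; lra.
by apply: pow_incr; have := exp_ineq1_le (x / INR m.+1); lra.
Qed.

(* e^(1/t) >= (1/((N+1) t))^(N+1), so lam e^(-1/t) <= lam (N+1)^(N+1) t * t^N. *)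
Lemma exp_neg_inv_lt_pow (N : nat) (lam : R) : 0 < lam ->
  exists2 d, 0 < d & forall t, 0 < t < d -> lam * exp (- / t) < t ^ N.
Proof.
move=> l0; have mP : 0 < INR N.+1 by apply/lt_0_INR/Nat.lt_0_succ.
set K := lam * INR N.+1 ^ N.+1.
have K0 : 0 < K by apply: Rmult_lt_0_compat => //; apply: pow_lt.
exists (/ K); first exact: Rinv_0_lt_compat.
move=> t [t0 tK].
have ub : exp (- / t) <= INR N.+1 ^ N.+1 * t ^ N.+1.
  have -> : INR N.+1 ^ N.+1 * t ^ N.+1 = / (/ t / INR N.+1) ^ N.+1.
    by rewrite -Rpow_mult_distr -pow_inv; congr pow; field; lra.
  have it : 0 < / t by apply: Rinv_0_lt_compat.
  rewrite exp_Ropp; apply: Rinv_le_contravar; last by apply: pow_div_le_exp; lra.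
  by apply: pow_lt; apply: Rdiv_lt_0_compat.
have Kt : K * t < 1 by rewrite -(Rinv_r K); [apply: Rmult_lt_compat_l | lra].
have tN := pow_lt t N t0.
have : lam * exp (- / t) <= K * t * t ^ N.
  have -> : K * t * t ^ N = lam * (INR N.+1 ^ N.+1 * (t * t ^ N)) by rewrite /K; ring.
  by apply: Rmult_le_compat_l; [lra | exact: ub].
nra.
Qed.

Lemma near_horn0_exp_curve (lam : R) (P : R * R -> Prop) :
  0 < lam -> near_horn0 P ->
  exists2 d, 0 < d & forall t, 0 < t < d -> P (t, lam * exp (- / t)).
Proof.
move=> l0 [eh [N [eh0 hP]]].
have [d d0 hd] := exp_neg_inv_lt_pow N l0.
have [e e0 [eeh ed]] := pos_lt_min eh0 d0.
exists e => // t [t0 te]; apply: hP; first lra.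
by split; [apply: Rmult_lt_0_compat => //; apply: exp_pos | apply: hd; lra].
Qed.

Lemma lim_alp_of_near_axis0 (f : M -> R) L :
  (forall eps, 0 < eps -> near_axis0 (fun q => Rabs (ext f q - L) < eps)) ->
  lim_0plus alp f L.
Proof.
move=> H eps e0; have [d d0 hd] := H eps e0.
by exists d; split => // t Ht td; rewrite /alp -ext_val; apply: hd; lra.
Qed.

Lemma lim_gam_of_near_horn0 lam (f : M -> R) L : 0 < lam ->
  (forall eps, 0 < eps -> near_horn0 (fun q => Rabs (ext f q - L) < eps)) ->
  lim_0plus (gam lam) f L.
Proof.
move=> l0 H eps e0; have [d d0 hd] := near_horn0_exp_curve l0 (H eps e0).
by exists d; split => // t Ht td; rewrite /gam -ext_val; apply: hd; lra.
Qed.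

Lemma Sstar_lim_alp_gam lam (f : M -> R) : 0 < lam -> Sstar f ->
  exists L, lim_0plus alp f L /\ lim_0plus (gam lam) f L.
Proof.
move=> l0 [fc [[C fC] /semialgebraic_map_ext fs]].
have g_bdd q : Rabs (ext f q) <= C.
  rewrite /ext; case: excluded_middle_informative => // _.
  have := fC (alp 1 Rlt_0_1); have := Rabs_pos (f (alp 1 Rlt_0_1)).
  by rewrite Rabs_R0; lra.
have [L axis] := decided_superlevel_cvg near_axis0_mono near_axis0_and
  near_axis0_true near_axis0_proper g_bdd
  (fun c => decided_lt_map near_axis0_mono near_axis0_and near_axis0_sgr c fs).
exists L; split; first exact: lim_alp_of_near_axis0.
apply: lim_gam_of_near_horn0 l0 _.
apply: near_horn0_cvg => [t eps t0 e0 | // | c].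
  exact: ext_vertical_continuity.
exact (decided_lt_map near_horn0_mono near_horn0_and near_horn0_sgr c fs).
Qed.

(** * The ring S^*(M) and its ideals *)

Lemma Sstar_cst (c : R) : Sstar (fun _ => c).
Proof.
split.
  by move=> p e e0; exists 1; split => [|q _]; rewrite ?Rminus_diag ?Rabs_R0; lra.
split; first by exists (Rabs c) => p; apply: Rle_refl.
by apply: semialgebraic_fun_of_map (semialgebraic_map_cst c) _.
Qed.

Lemma Sstar_add (f g : M -> R) : Sstar f -> Sstar g -> Sstar (fun p => f p + g p).
Proof.
move=> [fc [[Cf hf] fs]] [gc [[Cg hg] gs]]; split.
  move=> p e e0.
  have [d1 [d10 h1]] := fc p (e / 2) ltac:(lra).
  have [d2 [d20 h2]] := gc p (e / 2) ltac:(lra).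
  have [d d0 [dd1 dd2]] := pos_lt_min d10 d20.
  exists d; split => // q hq; have a1 := h1 q ltac:(lra); have a2 := h2 q ltac:(lra).
  have -> : f q + g q - (f p + g p) = f q - f p + (g q - g p) by ring.
  by have := Rabs_triang (f q - f p) (g q - g p); lra.
split.
  exists (Cf + Cg) => p.
  by have := Rabs_triang (f p) (g p); have := hf p; have := hg p; lra.
exact: (semialgebraic_fun_binop (top := GRing.Add) _ fs gs).
Qed.

Lemma Sstar_mul (f g : M -> R) : Sstar f -> Sstar g -> Sstar (fun p => f p * g p).
Proof.
move=> [fc [[Cf hf] fs]] [gc [[Cg hg] gs]]; split.
  move=> p e e0.
  have Cf0 : 0 <= Cf by have := hf p; have := Rabs_pos (f p); lra.
  have Cg0 : 0 <= Cg by have := hg p; have := Rabs_pos (g p); lra.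
  have k1 : 0 < e / (2 * (Cg + 1)) by apply: Rdiv_lt_0_compat; lra.
  have k2 : 0 < e / (2 * (Cf + 1)) by apply: Rdiv_lt_0_compat; lra.
  have [d1 [d10 h1]] := fc p _ k1.
  have [d2 [d20 h2]] := gc p _ k2.
  have [d d0 [dd1 dd2]] := pos_lt_min d10 d20.
  exists d; split => // q hq; have a1 := h1 q ltac:(lra); have a2 := h2 q ltac:(lra).
  have -> : f q * g q - f p * g p = f q * (g q - g p) + g p * (f q - f p) by ring.
  apply: Rle_lt_trans (Rabs_triang _ _) _; rewrite !Rabs_mult.
  have b1 : Rabs (f q) * Rabs (g q - g p) <= Cf * (e / (2 * (Cf + 1))).
    by apply: Rmult_le_compat; try apply: Rabs_pos; [apply: hf | lra].
  have b2 : Rabs (g p) * Rabs (f q - f p) <= Cg * (e / (2 * (Cg + 1))).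
    by apply: Rmult_le_compat; try apply: Rabs_pos; [apply: hg | lra].
  have c1 : Cf * (e / (2 * (Cf + 1))) = e / 2 - e / (2 * (Cf + 1)) by field; lra.
  have c2 : Cg * (e / (2 * (Cg + 1))) = e / 2 - e / (2 * (Cg + 1)) by field; lra.
  lra.
split.
  exists (Cf * Cg) => p; rewrite Rabs_mult.
  by apply: Rmult_le_compat; try apply: Rabs_pos; [apply: hf | apply: hg].
exact: (semialgebraic_fun_binop (top := GRing.Mul) _ fs gs).
Qed.

Section CurveLimits.
Variable c : forall t : R, 0 < t -> M.

Lemma lim_cst (a : R) : lim_0plus c (fun _ => a) a.
Proof.
move=> e e0; exists 1; split => [|t Ht _]; first lra.
by rewrite Rminus_diag Rabs_R0.
Qed.

Lemma lim_add f g a b : lim_0plus c f a -> lim_0plus c g b ->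
  lim_0plus c (fun p => f p + g p) (a + b).
Proof.
move=> hf hg e e0.
have [d1 [d10 h1]] := hf (e / 2) ltac:(lra).
have [d2 [d20 h2]] := hg (e / 2) ltac:(lra).
have [d d0 [dd1 dd2]] := pos_lt_min d10 d20.
exists d; split => // t Ht td.
have a1 := h1 t Ht ltac:(lra); have a2 := h2 t Ht ltac:(lra).
have -> : f (c Ht) + g (c Ht) - (a + b) = f (c Ht) - a + (g (c Ht) - b) by ring.
by have := Rabs_triang (f (c Ht) - a) (g (c Ht) - b); lra.
Qed.

Lemma lim_mul_bounded f g C : (forall p, Rabs (g p) <= C) -> lim_0plus c f 0 ->
  lim_0plus c (fun p => g p * f p) 0.
Proof.
move=> hg hf e e0.
have C0 : 0 <= C by have := hg (c Rlt_0_1); have := Rabs_pos (g (c Rlt_0_1)); lra.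
have k : 0 < e / (C + 1) by apply: Rdiv_lt_0_compat; lra.
have [d [d0 hd]] := hf _ k.
exists d; split => // t Ht td.
have := hd t Ht td; rewrite !Rminus_0_r Rabs_mult => a1.
have : Rabs (g (c Ht)) * Rabs (f (c Ht)) <= C * (e / (C + 1)).
  by apply: Rmult_le_compat; try apply: Rabs_pos; [apply: hg | lra].
have : e = C * (e / (C + 1)) + e / (C + 1) by field; lra.
lra.
Qed.

Lemma lim_unique f a b : lim_0plus c f a -> lim_0plus c f b -> a = b.
Proof.
move=> ha hb; apply: NNPP => ab.
have e0 : 0 < Rabs (a - b) / 2 by have := Rabs_pos_lt (a - b) ltac:(lra); lra.
have [d1 [d10 h1]] := ha _ e0.
have [d2 [d20 h2]] := hb _ e0.
have [t t0 [td1 td2]] := pos_lt_min d10 d20.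
have a1 := h1 _ t0 td1; have a2 := h2 _ t0 td2.
have := Rabs_triang (a - f (c t0)) (f (c t0) - b).
rewrite -Rabs_Ropp Ropp_minus_distr in a1.
have -> : a - f (c t0) + (f (c t0) - b) = a - b by ring.
lra.
Qed.

Lemma lim_zero_ideal : is_ideal (fun f => Sstar f /\ lim_0plus c f 0).
Proof.
split; first by move=> f [].
split; first by split; [apply: Sstar_cst | apply: lim_cst].
split.
  move=> f g [fS fl] [gS gl]; split; first exact: Sstar_add.
  by have := lim_add fl gl; rewrite Rplus_0_r.
move=> f g gS [fS fl]; split; first exact: Sstar_mul.
by have [_ [[C hC] _]] := gS; apply: lim_mul_bounded hC fl.
Qed.

(* An ideal J strictly above contains some g with limit L <> 0, hence the
   constant L = g - (g - L), hence the unit 1. *)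
Lemma lim_zero_maximal :
  (forall f, Sstar f -> exists L, lim_0plus c f L) ->
  is_maximal_ideal (fun f => Sstar f /\ lim_0plus c f 0).
Proof.
move=> lim_ex; split; first exact: lim_zero_ideal.
split.
  exists (fun _ => 1); split; first exact: Sstar_cst.
  by move=> [_ h]; have := lim_unique h (lim_cst 1); lra.
move=> J [J_S [_ [J_add J_mul]]] IJ.
case: (classic (exists g, J g /\ ~ (Sstar g /\ lim_0plus c g 0))) => [[g [Jg nIg]]|H].
- right => f fS; have gS := J_S g Jg; have [L hL] := lim_ex g gS.
  have L0 : L <> 0 by move=> L0; apply: nIg; split => //; rewrite -L0.
  have Ih : Sstar (fun p => g p + - L) /\ lim_0plus c (fun p => g p + - L) 0.
    split; first exact: Sstar_add gS (Sstar_cst (- L)).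
    by have := lim_add hL (lim_cst (- L)); rewrite Rplus_opp_r.
  have JL := J_add _ _ Jg (J_mul _ _ (Sstar_cst (-1)) (IJ _ Ih)).
  have EL : (fun p => g p + -1 * (g p + - L)) = (fun _ => L).
    by apply: functional_extensionality => p; ring.
  have Ef : (fun p => f p * / L * L) = f.
    by apply: functional_extensionality => p; field.
  by rewrite -Ef; apply: J_mul (Sstar_mul fS (Sstar_cst (/ L))) _; rewrite -EL.
- left => f; split; last exact: IJ.
  by move=> Jf; apply: NNPP => nI; apply: H; exists f.
Qed.

End CurveLimits.

Theorem mainTheorem14 (lam : R) (Hlam : 0 < lam) :
  (forall f, Sstar f -> exists L : R, lim_0plus (gam lam) f L) /\
  is_maximal_ideal (fun f => Sstar f /\ lim_0plus (gam lam) f 0) /\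
  (forall f, (Sstar f /\ lim_0plus (gam lam) f 0) <->
             (Sstar f /\ lim_0plus alp f 0)).
Proof.
have lims f : Sstar f -> exists L, lim_0plus alp f L /\ lim_0plus (gam lam) f L.
  exact: Sstar_lim_alp_gam.
have gam_lim f : Sstar f -> exists L, lim_0plus (gam lam) f L.
  by move=> /lims [L [_ hL]]; exists L.
split=> //; split; first exact: lim_zero_maximal.
move=> f; split=> -[fS f0]; split=> //; have [L [hA hG]] := lims f fS.
- by rewrite -(lim_unique hG f0).
- by rewrite -(lim_unique hA f0).
Qed.
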